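(* Let $X$ be a locally convex space and let $h\in\mathscr{C}$. Then $[h=c]\subset[h^{\square}=c]$. If, in addition, $h\in\mathscr{D}$, then $[h=c]=[h^{\square}=c]$.
   Context: $X$ is a non-trivial Hausdorff locally convex space with topology $\tau$, $X^*$ its dual with weak-star topology $\omega^*$, $Z=X\times X^*$ with topology $\tau\times\omega^*$, $c(x,x^* )=\langle x,x^*\rangle$. The dual of $Z$ is identified with $Z$ via $z\cdot z'=\langle x,x'^*\rangle+\langle x',x^*\rangle$, and $f^{\square}(z)=\sup\{z\cdot z'-f(z')\mid z'\in Z\}$. $[f=g]=\{z\mid f(z)=g(z)\}$. $\mathscr{C}$ is the class of proper convex $f:Z\to\overline{\mathbb R}$ with $f\ge c$; $\mathscr{R}$ those in $\mathscr{C}$ that are $\tau\times\omega^*$-lsc; $\mathscr{D}=\{f\in\mathscr{R}\mid f^{\square}\ge c\}$. *)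

From HB Require Import structures.
From mathcomp Require Import all_boot all_order all_algebra.
From mathcomp Require Import all_classical all_reals all_analysis.
Set Implicit Arguments. Unset Strict Implicit. Unset Printing Implicit Defensive.
Import Order.TTheory GRing.Theory Num.Theory.
Import numFieldNormedType.Exports.
Local Open Scope classical_set_scope.
Local Open Scope ring_scope.

Section Fitzpatrick.
Variables (R : realType) (X : tvsType R).

Definition is_dual (f : X -> R) : Prop :=
  (forall (a : R) (u v : X), f (a *: u + v) = a * f u + f v) /\ continuous f.

Definition dualX := {f : X -> R | is_dual f}.

Definition Zsp := (X * dualX)%type.

Definition dpair (x : X) (xs : dualX) : R := sval xs x.

Definition cfun (z : Zsp) : \bar R := (dpair z.1 z.2)%:E.

Definition zdot (z z' : Zsp) : R := dpair z.1 z'.2 + dpair z'.1 z.2.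

Definition fsq (f : Zsp -> \bar R) (z : Zsp) : \bar R :=
  ereal_sup [set ((zdot z z')%:E - f z')%E | z' in [set: Zsp]].

Definition eqset (f g : Zsp -> \bar R) : set Zsp := [set z | f z = g z].

Definition properf (f : Zsp -> \bar R) : Prop :=
  (forall z, f z != -oo%E) /\ (exists z, (f z < +oo)%E).

Definition convexf (f : Zsp -> \bar R) : Prop :=
  forall (t : R) (z1 z2 z : Zsp), 0 < t < 1 ->
    z.1 = t *: z1.1 + (1 - t) *: z2.1 ->
    (forall v : X, sval z.2 v = t * sval z1.2 v + (1 - t) * sval z2.2 v) ->
    (f z <= t%:E * f z1 + (1 - t)%:E * f z2)%E.

(* lower semicontinuity for tau × omega^*: the weak-star neighbourhoods of
   x0^* are generated by the sets {x^* | |<v,x^*> - <v,x0^*>| < e, v in F},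
   F finite *)
Definition lsc_tw (f : Zsp -> \bar R) : Prop :=
  forall (z0 : Zsp) (r : R), (r%:E < f z0)%E ->
    exists U : set X, nbhs z0.1 U /\
    exists (F : seq X) (e : R), 0 < e /\
      forall z : Zsp, U z.1 ->
        (forall v, v \in F -> `|sval z.2 v - sval z0.2 v| < e) ->
        (r%:E < f z)%E.

Definition classC (f : Zsp -> \bar R) : Prop :=
  properf f /\ convexf f /\ (forall z, (cfun z <= f z)%E).

Definition classR (f : Zsp -> \bar R) : Prop := classC f /\ lsc_tw f.

Definition classD (f : Zsp -> \bar R) : Prop :=
  classR f /\ (forall z, (cfun z <= fsq f z)%E).

End Fitzpatrick.

(* Let [h] be in [C] and [h z = c z].  Along the segment [t a + (1 - t) z],
   convexity of [h] and [h >= c] compare a linear and a quadratic function of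
   [t]; letting [t -> 0] gives [z.a - h a <= c z], i.e. [h^square z <= c z], and
   [a = z] gives equality.
   Conversely, let [h] be in [D] with [h^square z0 = c z0 < h z0].  Lower
   semicontinuity yields a convex neighbourhood of [z0.1] and finitely many
   evaluations controlling [h] near [z0]; the Mazur-Orlicz form of the
   Hahn-Banach theorem (proved from Zorn's lemma: a minimal sublinear
   functional is linear) then separates [(z0, c z0)] from the epigraph of [h]
   by a [tau x omega^*]-continuous affine functional, that is by some [w] in
   [Z], with [h^square w <= al < z0.w - c z0].  The same segment argument
   between [w] and [z0], now for the convex function [h^square >= c], gives
   [z0.w <= c z0 + al]. *)

From Pilot Require Import Defs.
From mathcomp Require Import all_boot all_order all_algebra.
From mathcomp Require Import all_classical all_reals all_analysis.
From mathcomp Require Import ring lra.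
Set Implicit Arguments. Unset Strict Implicit. Unset Printing Implicit Defensive.
Import Order.TTheory GRing.Theory Num.Theory.
Import numFieldNormedType.Exports.
Local Open Scope classical_set_scope.
Local Open Scope ring_scope.

Section HahnBanach.
Variables (R : realType) (V : lmodType R).

Definition sublinear (p : V -> R) :=
  (forall u w, p (u + w) <= p u + p w) /\
  (forall (t : R) u, 0 < t -> p (t *: u) <= t * p u).

Definition linear_functional (f : V -> R) :=
  forall (a : R) u w, f (a *: u + w) = a * f u + f w.

Definition is_convex (C : set V) :=
  forall (a : R) x y, 0 <= a -> a <= 1 -> C x -> C y -> C (a *: x + (1 - a) *: y).

Lemma sublinearZ p t u : sublinear p -> 0 < t -> p (t *: u) = t * p u.
Proof.
move=> [_ pZ] t0; apply/eqP; rewrite eq_le pZ //=.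
have := pZ t^-1 (t *: u); rewrite invr_gt0 t0 scalerA mulVf ?gt_eqF // scale1r.
by move=> /(_ isT); rewrite -(ler_pM2l t0) mulrA mulfV ?gt_eqF // mul1r.
Qed.

Lemma sublinear0 p : sublinear p -> p 0 = 0.
Proof.
by move=> sp; have := sublinearZ 0 sp (ltr0Sn _ 1); rewrite scaler0; lra.
Qed.

Lemma sublinear_opp_le p u : sublinear p -> - p (- u) <= p u.
Proof. by move=> sp; have := sp.1 u (- u); rewrite subrr sublinear0 //; lra. Qed.

Lemma sublinearD p q : sublinear p -> sublinear q -> sublinear (fun u => p u + q u).
Proof.
move=> [pD pZ] [qD qZ]; split=> [u w|t u t0]; first by have := pD u w; have := qD u w; lra.
by have := pZ t u t0; have := qZ t u t0; rewrite mulrDr; lra.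
Qed.

Lemma linear_functionalP f : linear_functional f ->
  [/\ f 0 = 0, {morph f : u w / u + w}, forall a u, f (a *: u) = a * f u
    & {morph f : u / - u}].
Proof.
move=> lf.
have f0 : f 0 = 0 by have := lf 1 0 0; rewrite scale1r addr0 mul1r => ?; lra.
have fD u w : f (u + w) = f u + f w by have := lf 1 u w; rewrite scale1r mul1r.
have fZ a u : f (a *: u) = a * f u by have := lf a u 0; rewrite !addr0 f0 addr0.
by split=> // u; rewrite -scaleN1r fZ mulN1r.
Qed.

Lemma linear_functional_sum (I : Type) f (s : seq I) (F : I -> V) :
  linear_functional f -> f (\sum_(i <- s) F i) = \sum_(i <- s) f (F i).
Proof.
move=> /linear_functionalP[f0 fD _ _].
by elim: s => [|i s IH]; rewrite ?big_nil ?f0 // !big_cons fD IH.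
Qed.

Section MazurOrlicz.
Variables (p : V -> R) (C : set V) (m : R) (c0 : V).
Hypotheses (sp : sublinear p) (cC : is_convex C) (Cc0 : C c0)
  (mC : forall c, C c -> m <= p c).

(* Pushing [p] down along the cone generated by [C] yields a sublinear
   functional below [p] which is at most [- m] on [- C]. *)
Definition mazur_set u :=
  [set p (u + tc.1 *: tc.2) - tc.1 * m | tc in [set tc : R * V | 0 <= tc.1 /\ C tc.2]].
Definition mazur_fun u := inf (mazur_set u).

Lemma mazur_set_lbound u : lbound (mazur_set u) (- p (- u)).
Proof.
move=> _ [[t c] [/= t0 Cc] <-].
have := sp.1 (u + t *: c) (- u); rewrite addrC addKr.
suff : t * m <= p (t *: c) by lra.
move: t0; rewrite le_eqVlt => /orP[/eqP <-|t0]; first by rewrite mul0r scale0r sublinear0.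
by rewrite sublinearZ // ler_pM2l // mC.
Qed.

Lemma mazur_fun_le u t c : 0 <= t -> C c -> mazur_fun u <= p (u + t *: c) - t * m.
Proof.
move=> t0 Cc; apply: ge_inf; last by exists (t, c).
by exists (- p (- u)); exact: mazur_set_lbound.
Qed.

Lemma mazur_fun_le_p u : mazur_fun u <= p u.
Proof. by have := mazur_fun_le u (lexx 0) Cc0; rewrite scale0r addr0 mul0r subr0. Qed.

Lemma mazur_fun_opp_le c : C c -> mazur_fun (- c) <= - m.
Proof.
move=> Cc; have := mazur_fun_le (- c) ler01 Cc.
by rewrite scale1r addNr sublinear0 // mul1r sub0r.
Qed.

Lemma mazur_set_neq0 u : mazur_set u !=set0.
Proof. by exists (p (u + 0 *: c0) - 0 * m); exists (0, c0). Qed.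

Lemma mazur_fun_sublinear : sublinear mazur_fun.
Proof.
split=> [u w|t u t0].
- have mazur_funD : forall a b, mazur_set u a -> mazur_set w b -> mazur_fun (u + w) <= a + b.
    move=> _ _ [[t1 c1] [/= t10 C1] <-] [[t2 c2] [/= t20 C2] <-].
    have [s0|s0] := eqVneq (t1 + t2) 0.
      have [-> ->] : t1 = 0 /\ t2 = 0 by split; lra.
      rewrite !scale0r !addr0 !mul0r !subr0.
      exact: le_trans (mazur_fun_le_p _) (sp.1 _ _).
    have sp0 : 0 < t1 + t2 by rewrite lt_neqAle eq_sym s0 addr_ge0.
    set a := t1 / (t1 + t2).
    have a0 : 0 <= a by rewrite divr_ge0 // ltW.
    have a1 : a <= 1 by rewrite ler_pdivrMr // mul1r lerDl.
    apply: le_trans (mazur_fun_le (u + w) (ltW sp0) (cC a0 a1 C1 C2)) _.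
    have -> : (t1 + t2) *: (a *: c1 + (1 - a) *: c2) = t1 *: c1 + t2 *: c2.
      rewrite scalerDr !scalerA /a; congr (_ *: _ + _ *: _); first by rewrite mulrC mulfVK.
      by rewrite mulrBr mulr1 mulrCA mulfV ?mulr1 //; lra.
    have := sp.1 (u + t1 *: c1) (w + t2 *: c2).
    by rewrite [_ + (w + _)]addrACA; lra.
  suff : mazur_fun (u + w) - mazur_fun w <= mazur_fun u by lra.
  apply: lb_le_inf (mazur_set_neq0 u) _ => a ua.
  suff : mazur_fun (u + w) - a <= mazur_fun w by lra.
  apply: lb_le_inf (mazur_set_neq0 w) _ => b wb; have := mazur_funD _ _ ua wb; lra.
- rewrite -ler_pdivrMl // mulrC.
  apply: lb_le_inf (mazur_set_neq0 u) _ => _ [[s c] [/= s0 Cc] <-].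
  rewrite ler_pdivrMr // mulrC.
  have -> : t * (p (u + s *: c) - s * m) = p (t *: u + (t * s) *: c) - (t * s) * m.
    by rewrite -scalerA -scalerDr sublinearZ // mulrBr mulrA.
  by apply: mazur_fun_le => //; rewrite mulr_ge0 // ltW.
Qed.

End MazurOrlicz.

Section ChainInf.
Variables (I : Type) (A : set I) (q : I -> V -> R) (p : V -> R).
Hypothesis Aq : forall i, A i -> sublinear (q i) /\ forall u, q i u <= p u.

Definition chain_inf u := inf [set q i u | i in A].

Lemma chain_inf_le u i : A i -> chain_inf u <= q i u.
Proof.
move=> Ai; apply: ge_inf; last by exists i.
exists (- p (- u)) => _ [j Aj <-]; have [sj qjp] := Aq Aj.
by have := qjp (- u); have := sublinear_opp_le u sj; lra.
Qed.

Lemma chain_inf_sublinear i0 : A i0 ->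
  (forall i j, A i -> A j -> (forall u, q i u <= q j u) \/ (forall u, q j u <= q i u)) ->
  sublinear chain_inf.
Proof.
move=> Ai0 Atot.
have Qne u : [set q i u | i in A] !=set0 by exists (q i0 u), i0.
split=> [u w|t u t0].
- suff : chain_inf (u + w) - chain_inf w <= chain_inf u by lra.
  apply: lb_le_inf (Qne u) _ => _ [i Ai <-].
  suff : chain_inf (u + w) - q i u <= chain_inf w by lra.
  apply: lb_le_inf (Qne w) _ => _ [j Aj <-].
  suff : chain_inf (u + w) <= q i u + q j w by lra.
  have [[si _] [sj _]] := (Aq Ai, Aq Aj).
  have [ij|ji] := Atot i j Ai Aj.
  + apply: le_trans (chain_inf_le _ Ai) _; apply: le_trans (si.1 u w) _.
    by rewrite lerD2l.
  + apply: le_trans (chain_inf_le _ Aj) _; apply: le_trans (sj.1 u w) _.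
    by rewrite lerD2r.
- rewrite -ler_pdivrMl // mulrC.
  apply: lb_le_inf (Qne u) _ => _ [i Ai <-].
  rewrite ler_pdivrMr // mulrC; apply: le_trans (chain_inf_le _ Ai) _.
  exact: (Aq Ai).1.2.
Qed.

End ChainInf.

Lemma minimal_sublinear_linear q : sublinear q ->
  (forall q', sublinear q' -> (forall u, q' u <= q u) -> forall u, q u <= q' u) ->
  linear_functional q.
Proof.
move=> sq qmin.
have qN v : q (- v) = - q v.
  have cv : is_convex [set v] by move=> a x y _ _ -> ->; rewrite -scalerDl subrKC scale1r.
  have qv : forall c, [set v] c -> q v <= q c by move=> c ->.
  have := qmin _ (mazur_fun_sublinear sq cv (erefl v) qv) (mazur_fun_le_p sq (erefl v) qv).
  move=> /(_ (- v)) /le_trans /(_ (mazur_fun_opp_le sq qv (erefl v))) qNv.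
  by apply/eqP; rewrite eq_le qNv /=; have := sublinear_opp_le v sq; lra.
have qD u w : q (u + w) = q u + q w.
  apply/eqP; rewrite eq_le sq.1 /=.
  by have := sq.1 (u + w) (- w); rewrite addrK qN; lra.
move=> a u w; rewrite qD; congr (_ + _).
have [a0|a0|->] := ltgtP a 0; last by rewrite scale0r mul0r sublinear0.
  rewrite -[a *: u]opprK -scaleNr qN sublinearZ ?oppr_gt0 //.
  by rewrite mulNr opprK.
by rewrite sublinearZ.
Qed.

Lemma sublinear_dominates_linear p : sublinear p ->
  exists f, linear_functional f /\ forall u, f u <= p u.
Proof.
move=> sp.
pose T := {q : V -> R | sublinear q /\ forall u, q u <= p u}.
pose below := fun s t : T => `[< forall u, sval t u <= sval s u >].
have t0 : T by exists p.
have [| | |[q [sq qp]] qmax] := @ZL_preorder T t0 below.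
- by move=> t; apply/asboolP.
- by move=> r s t /asboolP rs /asboolP st; apply/asboolP => u; exact: le_trans (st u) (rs u).
- move=> A Atot.
  have [[s0 As0]|A0] := pselect (A !=set0); last first.
    by exists t0 => s As; exfalso; apply: A0; exists s.
  have Aq (s : T) : A s -> sublinear (sval s) /\ forall u, sval s u <= p u.
    by case: s => q' ?.
  have sQ : sublinear (chain_inf A (fun s => sval s)).
    apply: (chain_inf_sublinear Aq As0) => s s' As As'.
    by case: (Atot s s' As As') => /asboolP; [right|left].
  have Qp u : chain_inf A (fun s => sval s) u <= p u.
    exact: le_trans (chain_inf_le Aq u As0) ((svalP s0).2 u).
  exists (exist _ (chain_inf A (fun s => sval s)) (conj sQ Qp)) => s As.
  apply/asboolP => u /=.
  exact: (chain_inf_le Aq u As).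
- exists q; split => //; apply: minimal_sublinear_linear => // q' sq' q'q.
  have q'p u : q' u <= p u := le_trans (q'q u) (qp u).
  by apply/asboolP/(qmax (exist _ q' (conj sq' q'p))); apply/asboolP.
Qed.

Lemma mazur_orlicz p C m c0 : sublinear p -> is_convex C -> C c0 ->
  (forall c, C c -> m <= p c) ->
  exists f, [/\ linear_functional f, forall u, f u <= p u & forall c, C c -> m <= f c].
Proof.
move=> sp cC Cc0 mC.
have [f [lf fq]] := sublinear_dominates_linear (mazur_fun_sublinear sp cC Cc0 mC).
exists f; split => // [u|c Cc]; first exact: le_trans (fq u) (mazur_fun_le_p sp Cc0 mC u).
have [_ _ _ fN] := linear_functionalP lf.
by have := le_trans (fq (- c)) (mazur_fun_opp_le sp mC Cc); rewrite fN; lra.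
Qed.

End HahnBanach.

Section Minkowski.
Variables (R : realType) (V : lmodType R) (S : set V).
Hypotheses (cS : is_convex S) (S0 : S 0)
  (absS : forall x, exists2 t : R, 0 < t & S (t^-1 *: x)).

Definition minkowski_set x := [set t : R | 0 < t /\ S (t^-1 *: x)].
Definition minkowski_fun x := inf (minkowski_set x).

Lemma minkowski_set_neq0 x : minkowski_set x !=set0.
Proof. by have [t t0 St] := absS x; exists t. Qed.

Lemma minkowski_fun_ge0 x : 0 <= minkowski_fun x.
Proof. by apply: lb_le_inf (minkowski_set_neq0 x) _ => t [/ltW]. Qed.

Lemma minkowski_fun_le x t : 0 < t -> S (t^-1 *: x) -> minkowski_fun x <= t.
Proof. by move=> t0 St; apply: ge_inf; [exists 0 => s [/ltW]|]. Qed.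

Lemma minkowski_fun_le1 x : S x -> minkowski_fun x <= 1.
Proof. by move=> Sx; apply: minkowski_fun_le => //; rewrite invr1 scale1r. Qed.

Lemma minkowski_fun_lt1 x : minkowski_fun x < 1 -> S x.
Proof.
move=> /(inf_lt (minkowski_set_neq0 x))[t [t0 St] t1].
have := cS (ltW t0) (ltW t1) St S0.
by rewrite scaler0 addr0 scalerA mulfV ?gt_eqF // scale1r.
Qed.

Lemma minkowski_fun_sublinear : sublinear minkowski_fun.
Proof.
split=> [u w|t u t0].
- suff : minkowski_fun (u + w) - minkowski_fun w <= minkowski_fun u by lra.
  apply: lb_le_inf (minkowski_set_neq0 u) _ => t1 [t10 S1].
  suff : minkowski_fun (u + w) - t1 <= minkowski_fun w by lra.
  apply: lb_le_inf (minkowski_set_neq0 w) _ => t2 [t20 S2].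
  suff : minkowski_fun (u + w) <= t1 + t2 by lra.
  have s0 : 0 < t1 + t2 by rewrite addr_gt0.
  set a := t1 / (t1 + t2).
  have a0 : 0 <= a by rewrite divr_ge0 // ltW.
  have a1 : a <= 1 by rewrite ler_pdivrMr // mul1r lerDl ltW.
  apply: minkowski_fun_le => //.
  have -> : (t1 + t2)^-1 *: (u + w) = a *: (t1^-1 *: u) + (1 - a) *: (t2^-1 *: w).
    have n1 : t1 != 0 by rewrite gt_eqF.
    have n2 : t2 != 0 by rewrite gt_eqF.
    have n3 : t1 + t2 != 0 by rewrite gt_eqF.
    rewrite scalerDr !scalerA /a; congr (_ *: _ + _ *: _); field.
      by rewrite n1 n3.
    by rewrite n2 n3.
  exact: cS a0 a1 S1 S2.
- rewrite -ler_pdivrMl // mulrC.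
  apply: lb_le_inf (minkowski_set_neq0 u) _ => s [s0 Ss].
  rewrite ler_pdivrMr // mulrC; apply: minkowski_fun_le; first exact: mulr_gt0.
  by rewrite scalerA invfM mulrAC mulVf ?gt_eqF // mul1r.
Qed.

End Minkowski.

Section LocallyConvex.
Variables (R : realType) (X : tvsType R).

Lemma nbhs0_absorbing (S : set X) : nbhs 0 S ->
  forall x, exists2 t : R, 0 < t & S (t^-1 *: x).
Proof.
move=> S0 x.
have /= := scale_continuous ((0 : R^o), x) S.
rewrite scale0r => /(_ S0)[]/= B [B1 B2] BS.
move: B1 => /nbhs_ballP[e /= e0 eA].
have e2 : 0 < e / 2 by rewrite divr_gt0.
exists (e / 2)^-1; first by rewrite invr_gt0.
rewrite invrK; apply: (BS (e / 2, x)); split => /=; last exact: nbhs_singleton.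
apply: eA; rewrite /ball /= sub0r normrN ger0_norm ?ltW //.
by rewrite ltr_pdivrMr // ltr_pMr // ltr1n.
Qed.

Lemma convex_nbhs0_shift (U : set X) (x0 : X) : nbhs x0 U ->
  exists S : set X, [/\ is_convex S, S 0, nbhs 0 S & forall s, S s -> U (x0 + s)].
Proof.
move=> Ux0.
have [B cB [Bop Bnb]] := @locally_convex R X.
have [b [Bb bx0] bU] := Bnb x0 U Ux0.
exists [set s | b (x0 + s)]; split => [a s1 s2 a0 a1 S1 S2|||s /bU //].
- have := cB b (mem_set Bb) (x0 + s1) (x0 + s2) (Itv01 a0 a1) (mem_set S1) (mem_set S2).
  rewrite inE; congr b.
  change (a *: (x0 + s1) + (1 - a) *: (x0 + s2) = x0 + (a *: s1 + (1 - a) *: s2)).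
  by rewrite !scalerDr addrACA -scalerDl subrKC scale1r.
- by rewrite /= addr0.
- have nb : nbhs x0 b by apply: open_nbhs_nbhs; split => //; exact: Bop.
  have := nbhsB (- x0) nb; rewrite addNr; apply: filterS => _ [u bu <-] /=.
  by rewrite addrA subrr add0r.
Qed.

(* As [L <= 1] on [S], [|L t - L x1| <= eps / 2] once [t - x1] lies in both
   [(eps / 2) S] and [- (eps / 2) S]. *)
Lemma minkowski_fun_dominated_continuous (S : set X) (L : X -> R) :
  nbhs 0 S -> linear_functional L -> (forall x, L x <= minkowski_fun S x) -> continuous L.
Proof.
move=> nS lL LS x1.
have [L0 LD LZ LN] := linear_functionalP lL.
apply/cvgrPdist_lt => eps eps0.
set k := 2 / eps.
have k0 : 0 < k by rewrite divr_gt0.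
have ki : k^-1 != 0 by rewrite invr_eq0 gt_eqF.
have N1 : nbhs x1 [set t | S (k *: (t - x1))].
  have := nbhsB (z := 0) x1 (nbhs0Z (r := k^-1) ki nS).
  rewrite addr0; apply: filterS => _ [_ [s Ss <-] <-] /=.
  by rewrite addrC addKr scalerA mulfV ?gt_eqF // scale1r.
have N2 : nbhs x1 [set t | S (k *: (x1 - t))].
  have := nbhsB (z := 0) x1 (nbhs0Z (r := k^-1) ki (nbhs0N nS)).
  rewrite addr0; apply: filterS => _ [_ [_ [s Ss <-] <-] <-] /=.
  by rewrite scalerN opprD opprK addrA subrr add0r scalerA mulfV ?gt_eqF // scale1r.
near=> t.
have S1 : S (k *: (t - x1)) by near: t; exact: N1.
have S2 : S (k *: (x1 - t)) by near: t; exact: N2.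
have := le_trans (LS _) (minkowski_fun_le1 S1).
have := le_trans (LS _) (minkowski_fun_le1 S2).
rewrite !LZ (LD t) (LD x1) !LN => L2 L1.
have ek : k * eps = 2 by rewrite /k mulfVK ?gt_eqF.
rewrite real_ltr_norml ?num_real //; apply/andP; split; nra.
Unshelve. all: by end_near.
Qed.

End LocallyConvex.

Lemma le_add_of_quadratic_le (R : realType) (A B G W : R) :
  (forall t, 0 < t -> t < 1 ->
    t ^+ 2 * A + (1 - t) ^+ 2 * G + t * (1 - t) * W <= t * B + (1 - t) * G) ->
  W <= B + G.
Proof.
move=> H; rewrite leNgt; apply/negP => BGW.
set d := W - B - G; set K := W - A - G.
have d0 : 0 < d by rewrite /d; lra.
have K0 := normr_ge0 K.
(* At [t] the hypothesis reads [t * (d - t * K) <= 0]: pick [t] with [t * |K| < d]. *)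
set t := d / (2 * (`|K| + d + 1)).
have den0 : 0 < 2 * (`|K| + d + 1) by lra.
have t0 : 0 < t by rewrite /t divr_gt0.
have td : t * (2 * (`|K| + d + 1)) = d by rewrite /t mulfVK // gt_eqF.
have t1 : t < 1 by nra.
have dtK : d <= t * K.
  have := H t t0 t1; rewrite -subr_le0.
  have -> : t ^+ 2 * A + (1 - t) ^+ 2 * G + t * (1 - t) * W - (t * B + (1 - t) * G)
    = t * (d - t * K) by rewrite /d /K; ring.
  by rewrite pmulr_rle0 // subr_le0.
have : t * K <= t * `|K| by rewrite ler_pM2l // ler_norm.
nra.
Qed.

Section FitzpatrickCalculus.
Variables (R : realType) (X : tvsType R).
Local Notation Z := (Zsp X).
Local Notation D := (dualX X).

Lemma dual_linear (d : D) : linear_functional (sval d).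
Proof. exact: (svalP d).1. Qed.

Lemma dualD (d : D) u v : sval d (u + v) = sval d u + sval d v.
Proof. by have [_ dD _ _] := linear_functionalP (dual_linear d); exact: dD. Qed.

Lemma dualZ (d : D) (a : R) u : sval d (a *: u) = a * sval d u.
Proof. by have [_ _ dZ _] := linear_functionalP (dual_linear d); exact: dZ. Qed.

Lemma dual_comb_subproof (s t : R) (f g : D) :
  is_dual (fun v => s * sval f v + t * sval g v).
Proof.
split=> [a u v|x]; first by rewrite !(svalP f).1 !(svalP g).1; ring.
apply: (@continuousD _ R^o _ (fun v => s * sval f v) (fun v => t * sval g v)).
  apply: (@continuousM _ _ (fun=> s) (sval f)); [exact: cst_continuous|exact: (svalP f).2].
apply: (@continuousM _ _ (fun=> t) (sval g)); [exact: cst_continuous|exact: (svalP g).2].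
Qed.

Definition dual_comb (s t : R) (f g : D) : D := exist _ _ (dual_comb_subproof s t f g).

Definition zcomb (s : R) (z1 : Z) (t : R) (z2 : Z) : Z :=
  (s *: z1.1 + t *: z2.1, dual_comb s t z1.2 z2.2).

Definition creal (z : Z) : R := Defs.dpair z.1 z.2.

Lemma cfunE (z : Z) : cfun z = (creal z)%:E.
Proof. by []. Qed.

Lemma zdotC (z w : Z) : zdot z w = zdot w z.
Proof. by rewrite /zdot addrC. Qed.

Lemma zdot_zcomb (s : R) (z1 : Z) (t : R) (z2 a : Z) :
  zdot (zcomb s z1 t z2) a = s * zdot z1 a + t * zdot z2 a.
Proof. rewrite /zdot /Defs.dpair /= dualD !dualZ; ring. Qed.

Lemma zdot_self (z : Z) : zdot z z = 2 * creal z.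
Proof. rewrite /zdot /creal; ring. Qed.

Lemma creal_zcomb (s : R) (z1 : Z) (t : R) (z2 : Z) :
  creal (zcomb s z1 t z2) = s ^+ 2 * creal z1 + t ^+ 2 * creal z2 + s * t * zdot z1 z2.
Proof. rewrite /creal /zdot /Defs.dpair /= !dualD !dualZ; ring. Qed.

Local Open Scope ereal_scope.

Lemma ge_cfun_neqNy (h : Z -> \bar R) a : cfun a <= h a -> h a != -oo.
Proof. by apply: contraTneq => ->; rewrite cfunE leeNy_eq. Qed.

Lemma fsq_ge (h : Z -> \bar R) z a : (zdot z a)%:E - h a <= fsq h z.
Proof. by apply: ereal_sup_ubound; exists a. Qed.

Lemma fsq_le (h : Z -> \bar R) z (y : R) : (forall a, cfun a <= h a) ->
  (forall a r, h a = r%:E -> (zdot z a - r <= y)%R) -> fsq h z <= y%:E.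
Proof.
move=> hc hy; apply: ge_ereal_sup => _ [a _ <-].
have := ge_cfun_neqNy (hc a); have := hy a.
by case: (h a) => [r /(_ r erefl) hr _| _ _|//]; rewrite ?addeNy ?leNye // -EFinB lee_fin.
Qed.

Lemma convexf_le (h : Z -> \bar R) (t r1 r2 : R) a1 a2 :
  convexf h -> (forall a, cfun a <= h a) -> (0 < t < 1)%R ->
  h a1 <= r1%:E -> h a2 <= r2%:E -> h (zcomb t a1 (1 - t) a2) <= (t * r1 + (1 - t) * r2)%:E.
Proof.
move=> ch hc t01 ha1 ha2; have /andP[t0 t1] := t01.
apply: le_trans (ch t a1 a2 (zcomb t a1 (1 - t) a2) t01 erefl (fun=> erefl)) _.
move: ha1 ha2 (ge_cfun_neqNy (hc a1)) (ge_cfun_neqNy (hc a2)).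
case: (h a1) (h a2) => [s1| |] [s2| |] //; rewrite ?leye_eq // !lee_fin => s1r s2r _ _.
by apply: lerD; apply: ler_wpM2l => //; lra.
Qed.

Lemma fsq_le_cfun_of_eq (h : Z -> \bar R) z : convexf h -> (forall a, cfun a <= h a) ->
  h z = cfun z -> fsq h z <= cfun z.
Proof.
move=> ch hc hz; rewrite cfunE; apply: fsq_le => // a r ha.
suff : (zdot a z <= r + creal z)%R by rewrite zdotC; lra.
apply: (le_add_of_quadratic_le (A := creal a)) => t t0 t1.
have t01 : (0 < t < 1)%R by rewrite t0 t1.
have har : h a <= r%:E by rewrite ha.
have hzc : h z <= (creal z)%:E by rewrite hz.
have := le_trans (hc _) (convexf_le ch hc t01 har hzc).
by rewrite cfunE lee_fin creal_zcomb.
Qed.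

Lemma eqset_cfun_sub_fsq (h : Z -> \bar R) :
  classC h -> eqset h (@cfun R X) `<=` eqset (fsq h) (@cfun R X).
Proof.
move=> [_ [ch hc]] z /= hz; apply/eqP; rewrite eq_le fsq_le_cfun_of_eq //=.
have := fsq_ge h z z; rewrite hz cfunE zdot_self -EFinB.
by apply: le_trans; rewrite lee_fin; lra.
Qed.

Lemma fsq_zcomb_le (h : Z -> \bar R) (t a b : R) w z : (forall a, cfun a <= h a) ->
  (0 <= t <= 1)%R -> fsq h w <= a%:E -> fsq h z <= b%:E ->
  fsq h (zcomb t w (1 - t) z) <= (t * a + (1 - t) * b)%:E.
Proof.
move=> hc /andP[t0 t1] hw hz; apply: fsq_le => // c r hcr.
have := le_trans (fsq_ge h w c) hw; have := le_trans (fsq_ge h z c) hz.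
rewrite hcr -!EFinB !lee_fin zdot_zcomb => zb wa.
have -> : (t * zdot w c + (1 - t) * zdot z c - r
  = t * (zdot w c - r) + (1 - t) * (zdot z c - r))%R by ring.
by apply: lerD; apply: ler_wpM2l => //; lra.
Qed.

Lemma zdot_le_of_fsq_le (h : Z -> \bar R) z w (al : R) :
  (forall a, cfun a <= h a) -> (forall a, cfun a <= fsq h a) ->
  fsq h z = cfun z -> fsq h w <= al%:E -> (zdot z w <= creal z + al)%R.
Proof.
move=> hc hD hz hw; rewrite zdotC addrC.
apply: (le_add_of_quadratic_le (A := creal w)) => t t0 t1.
have t01 : (0 <= t <= 1)%R by rewrite !ltW.
have hzc : fsq h z <= (creal z)%:E by rewrite hz.
have := le_trans (hD _) (fsq_zcomb_le hc t01 hw hzc).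
by rewrite !cfunE lee_fin creal_zcomb.
Qed.

End FitzpatrickCalculus.

Lemma finitely_dominated_eval (R : realType) (V : lmodType R) (L : (V -> R^o) -> R)
    (F : seq V) (K : R) :
  linear_functional L -> (forall phi, L phi <= K * \sum_(v <- F) `|phi v|) ->
  exists y, forall phi : V -> R^o, linear_functional phi -> L phi = phi y.
Proof.
move=> lL LF; have [_ LD LZ LN] := linear_functionalP lL.
pose delta v : V -> R^o := fun u => if u == v then 1 else 0.
exists (\sum_(v <- undup F) L (delta v) *: v) => phi lphi.
pose psi := \sum_(v <- undup F) phi v *: delta v.
have psiE u : u \in F -> psi u = phi u.
  move=> uF; rewrite /psi fct_sumE (big_rem u) ?mem_undup //= big1_seq ?addr0.
    by rewrite scalrfctE /delta eqxx; exact: mulr1.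
  move=> v /andP[_ vu]; rewrite scalrfctE /delta; case: eqP => [uv|_]; last exact: mulr0.
  by rewrite uv mem_rem_uniqF ?undup_uniq in vu.
have L_le0 chi : (forall u, u \in F -> chi u = 0) -> L chi <= 0.
  move=> chi0; apply: le_trans (LF chi) _.
  by rewrite big1_seq ?mulr0 // => v /andP[_ vF]; rewrite chi0 ?normr0.
have -> : L phi = L psi.
  have dphi u : u \in F -> (phi - psi) u = 0.
    by move=> uF; rewrite -[LHS]/(phi u - psi u) psiE ?subrr.
  have dpsi u : u \in F -> (psi - phi) u = 0.
    by move=> uF; rewrite -[LHS]/(psi u - phi u) psiE ?subrr.
  by have := L_le0 _ dphi; have := L_le0 _ dpsi; rewrite !LD !LN; lra.
have [_ _ phiZ _] := linear_functionalP lphi.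
rewrite linear_functional_sum // (linear_functional_sum _ _ lphi).
by apply: eq_bigr => v _; rewrite LZ phiZ mulrC.
Qed.

Section SeparatingGauge.
Variables (R : realType) (X : tvsType R).
Local Notation Z := (Zsp X).

(* [Z x R] with [X^*] embedded in [R^X]; on the second factor, weak-star
   continuity becomes domination by finitely many evaluations
   ([finitely_dominated_eval]). *)
Definition ZR : lmodType R := (X * ((X -> R^o) * R^o))%type.

Definition zr_of (a : Z) (r : R) : ZR := (a.1, (sval a.2 : X -> R^o, r)).

Lemma zr_of_zcomb t a1 r1 a2 r2 :
  zr_of (zcomb t a1 (1 - t) a2) (t * r1 + (1 - t) * r2)
  = t *: zr_of a1 r1 + (1 - t) *: zr_of a2 r2.
Proof. by []. Qed.

Variables (S : set X) (F : seq X) (e rho : R).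
Hypotheses (cS : is_convex S) (S0 : S 0) (nS : nbhs 0 S) (e0 : 0 < e) (rho0 : 0 < rho).

Definition sep_gauge (u : ZR) : R :=
  minkowski_fun S u.1 + (\sum_(v <- F) `|u.2.1 v|) / e + Num.max u.2.2 0 / rho.

Lemma sep_gauge_sublinear : sublinear sep_gauge.
Proof.
have [mD mZ] := minkowski_fun_sublinear cS (nbhs0_absorbing nS).
apply: sublinearD; first apply: sublinearD.
- by split=> [u w|t u t0]; [exact: mD|exact: mZ].
- split=> [u w|t u t0]; rewrite ?mulrA -?mulrDl ler_pM2r ?invr_gt0 //.
    by rewrite -big_split /=; apply: ler_sum => v _; exact: ler_normD.
  rewrite mulr_sumr; apply: ler_sum => v _.
  by rewrite -[X in `|X|]/(t * u.2.1 v) normrM gtr0_norm.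
- split=> [u w|t u t0]; rewrite ?mulrA -?mulrDl ler_pM2r ?invr_gt0 //.
    rewrite -[(u + w).2.2]/(u.2.2 + w.2.2) ge_max; apply/andP; split.
      by apply: lerD; rewrite le_max lexx.
    by apply: addr_ge0; rewrite le_max lexx orbT.
  by rewrite -[(t *: u).2.2]/(t * u.2.2) maxr_pMr ?mulr0 // ltW.
Qed.

Lemma sep_gauge_lt1 u : sep_gauge u < 1 ->
  [/\ S u.1, forall v, v \in F -> `|u.2.1 v| < e & u.2.2 < rho].
Proof.
rewrite /sep_gauge => p1.
have g1 := minkowski_fun_ge0 (nbhs0_absorbing nS) u.1.
have g2 : 0 <= (\sum_(v <- F) `|u.2.1 v|) / e by rewrite divr_ge0 ?sumr_ge0 ?ltW.
have g3 : 0 <= Num.max u.2.2 0 / rho by rewrite divr_ge0 ?le_max ?lexx ?orbT ?ltW.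
split.
- by apply: (minkowski_fun_lt1 cS S0 (nbhs0_absorbing nS)); lra.
- move=> v vF; apply: le_lt_trans (_ : _ <= \sum_(w <- F) `|u.2.1 w|) _.
    by rewrite (big_rem v vF) /= lerDl sumr_ge0.
  by rewrite -[e]mul1r -ltr_pdivrMr //; lra.
- apply: le_lt_trans (_ : _ <= Num.max u.2.2 0) _; first by rewrite le_max lexx.
  by rewrite -[rho]mul1r -ltr_pdivrMr //; lra.
Qed.

Lemma sep_gauge_dominated (f : ZR -> R) :
  linear_functional f -> (forall u, f u <= sep_gauge u) ->
  exists (w : Z) (la : R), 0 <= la /\ forall a r, f (zr_of a r) = zdot w a + r * la.
Proof.
move=> lf fp; have [f0 fD fZ fN] := linear_functionalP lf.
pose L1 (x : X) := f (x, (0, 0)); pose L2 (phi : X -> R^o) := f (0, (phi, 0)).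
pose la := f (0, (0, 1)).
have fE x phi r : f (x, (phi, r)) = L1 x + L2 phi + r * la.
  rewrite /L1 /L2 /la -fZ -!fD; congr f.
  rewrite -[RHS]/(x + 0 + r *: 0, (0 + phi + r *: 0, 0 + 0 + r * 1)).
  by rewrite !scaler0 !addr0 !add0r mulr1.
have L1lin : linear_functional L1.
  move=> a x y; rewrite /L1 -fZ -fD; congr f.
  by rewrite -[RHS]/(a *: x + y, (a *: 0 + 0, a *: 0 + 0)) !scaler0 !addr0.
have L2lin : linear_functional L2.
  move=> a phi psi; rewrite /L2 -fZ -fD; congr f.
  by rewrite -[RHS]/(a *: 0 + 0, (a *: phi + psi, a *: 0 + 0)) !scaler0 !addr0.
have m0 : minkowski_fun S 0 = 0.
  exact: sublinear0 (minkowski_fun_sublinear cS (nbhs0_absorbing nS)).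
have sum0 : \sum_(v <- F) `|(0 : X -> R^o) v| = 0 by rewrite big1 // => v _; exact: normr0.
have L1m x : L1 x <= minkowski_fun S x.
  by apply: le_trans (fp _) _; rewrite /sep_gauge /= sum0 maxxx !mul0r !addr0.
have L2m phi : L2 phi <= e^-1 * \sum_(v <- F) `|phi v|.
  by apply: le_trans (fp _) _; rewrite /sep_gauge /= m0 maxxx mul0r add0r addr0 mulrC.
have la0 : 0 <= la.
  have := fp (0, (0, -1)); rewrite fE /sep_gauge /= m0 sum0 (max_r (lerN10 R)).
  have [L10 L20] : L1 0 = 0 /\ L2 0 = 0 by split; exact: f0.
  by rewrite L10 L20 !mul0r !add0r; lra.
have [y Ly] := finitely_dominated_eval L2lin L2m.
pose xs : dualX X := exist _ L1 (conj L1lin (minkowski_fun_dominated_continuous nS L1lin L1m)).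
exists (y, xs), la; split => // a r.
rewrite /zr_of fE Ly; last exact: dual_linear.
by congr (_ + _); exact: addrC.
Qed.

End SeparatingGauge.

Definition epigraph_shift (R : realType) (X : tvsType R) (h : Zsp X -> \bar R) z0 b :
  set (ZR X) := [set u | exists a r, (h a <= r%:E)%E /\ u = zr_of a r - zr_of z0 b].

Lemma epigraph_shift_convex (R : realType) (X : tvsType R) (h : Zsp X -> \bar R) z0 b :
  convexf h -> (forall a, (cfun a <= h a)%E) -> is_convex (epigraph_shift h z0 b).
Proof.
move=> ch hc t _ _ t0 t1 [a1 [r1 [h1 ->]]] [a2 [r2 [h2 ->]]].
have [->|tn0] := eqVneq t 0; first by rewrite scale0r add0r subr0 scale1r; exists a2, r2.
have [->|tn1] := eqVneq t 1; first by rewrite scale1r subrr scale0r addr0; exists a1, r1.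
have t01 : 0 < t < 1 by rewrite !lt_neqAle eq_sym tn0 tn1 t0 t1.
exists (zcomb t a1 (1 - t) a2), (t * r1 + (1 - t) * r2); split; first exact: convexf_le.
by rewrite zr_of_zcomb !scalerBr addrACA -opprD -scalerDl subrKC scale1r.
Qed.

Lemma EFin_lt_between (R : realType) (x : R) (y : \bar R) :
  (x%:E < y)%E -> exists b : R, x < b /\ (b%:E < y)%E.
Proof.
case: y => [r| |] xy; last by rewrite ltNge leNye in xy.
  by exists ((x + r) / 2); rewrite lte_fin in xy; rewrite lte_fin; split; lra.
by exists (x + 1); split; [lra|exact: ltry].
Qed.

Lemma epigraph_separation (R : realType) (X : tvsType R) (h : Zsp X -> \bar R) z0 :
  classR h -> ((creal z0)%:E < h z0)%E ->
  exists (w : Zsp X) (la b : R), [/\ 0 <= la, creal z0 < b &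
    forall a r, (h a <= r%:E)%E -> 1 <= zdot w a - zdot w z0 + (r - b) * la].
Proof.
move=> [[[_ [a1 ha1]] [ch hc]] hl] /EFin_lt_between[be [gbe hbe]].
have [U [nU [F [e [e0 hU]]]]] := hl z0 be hbe.
have [S [cS S0 nS SU]] := convex_nbhs0_shift nU.
set b := (creal z0 + be) / 2; set rho := be - b.
have rho0 : 0 < rho by rewrite /rho /b; lra.
have [r1 har1] : exists r, (h a1 <= r%:E)%E.
  move: ha1 (ge_cfun_neqNy (hc a1)); case: (h a1) => [r| |] // _ _.
  by exists r.
have epi1 : epigraph_shift h z0 b (zr_of a1 r1 - zr_of z0 b) by exists a1, r1.
have gauge_ge1 c : epigraph_shift h z0 b c -> 1 <= sep_gauge S F e rho c.
  move=> [a [r [har ->]]]; rewrite leNgt; apply/negP.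
  move=> /(sep_gauge_lt1 cS S0 nS e0 rho0)[/= /SU Ua Fa rb].
  rewrite addrC subrK in Ua.
  have := lt_le_trans (hU a Ua Fa) har; rewrite lte_fin /rho in rb *; lra.
have cC : is_convex (epigraph_shift h z0 b) := epigraph_shift_convex ch hc.
have [f [lf fp fC]] := mazur_orlicz (sep_gauge_sublinear F cS nS e0 rho0) cC epi1 gauge_ge1.
have [w [la [la0 fE]]] := sep_gauge_dominated cS nS lf fp.
exists w, la, b; split => // [|a r har]; first by rewrite /b; lra.
have [_ fD _ fN] := linear_functionalP lf.
have /fC : epigraph_shift h z0 b (zr_of a r - zr_of z0 b) by exists a, r.
by rewrite fD fN !fE; lra.
Qed.

Lemma fsq_separation (R : realType) (X : tvsType R) (h : Zsp X -> \bar R) z0 :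
  classR h -> fsq h z0 = cfun z0 -> (cfun z0 < h z0)%E ->
  exists (w : Zsp X) (al : R), (fsq h w <= al%:E)%E /\ creal z0 + al < zdot z0 w.
Proof.
move=> hR hz0 hlt; have hc := hR.1.2.2.
have [w [la [b [la0 gb sepw]]]] := epigraph_separation hR hlt.
(* With [mu = (1 + la)^-1] the bound below does not depend on [r], which
   covers [la = 0] and [la > 0] at once. *)
set g := creal z0; set mu := (1 + la)^-1.
have mu0 : 0 < mu by rewrite invr_gt0; lra.
have mula : mu * (1 + la) = 1 by rewrite mulVf // gt_eqF //; lra.
exists (zcomb mu z0 (- mu) w), (mu * (g - 1 - zdot w z0 - la * b)); split.
- apply: fsq_le => // a r har.
  have z0a : zdot z0 a - r <= g.
    by have := fsq_ge h z0 a; rewrite hz0 har -EFinB lee_fin.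
  have := sepw a r; rewrite har lexx => /(_ isT) wa.
  rewrite zdot_zcomb -subr_ge0.
  have -> : mu * (g - 1 - zdot w z0 - la * b) - (mu * zdot z0 a + - mu * zdot w a - r)
    = mu * (g - 1 - zdot w z0 - la * b - (zdot z0 a - zdot w a - (1 + la) * r))
      + (1 - mu * (1 + la)) * r by ring.
  by rewrite mula subrr mul0r addr0; apply: mulr_ge0; [exact: ltW|lra].
- rewrite [zdot z0 _]zdotC zdot_zcomb zdot_self -subr_gt0.
  have -> : mu * (2 * g) + - mu * zdot w z0 - (g + mu * (g - 1 - zdot w z0 - la * b))
    = mu * (1 + la * (b - g)) + (mu * (1 + la) - 1) * g by ring.
  have : 0 <= la * (b - g) by rewrite mulr_ge0 // subr_ge0 ltW.
  by rewrite mula subrr mul0r addr0 => ?; apply: mulr_gt0 => //; lra.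
Qed.

Theorem lemma1p1 (R : realType) (X : tvsType R)
  (hX : hausdorff_space X) (ntX : exists x : X, x != 0)
  (h : Zsp X -> \bar R) :
  classC h ->
  eqset h (@cfun R X) `<=` eqset (fsq h) (@cfun R X) /\
  (classD h -> eqset h (@cfun R X) = eqset (fsq h) (@cfun R X)).
Proof.
move=> hC; split; first exact: eqset_cfun_sub_fsq.
move=> [hR hD]; apply/seteqP; split; first exact: eqset_cfun_sub_fsq.
have hc := hR.1.2.2.
move=> z /= hz; apply/eqP; rewrite eq_le hc andbT leNgt; apply/negP => hlt.
have [w [al [hw wal]]] := fsq_separation hR hz hlt.
by have := zdot_le_of_fsq_le hc hD hz hw; lra.
Qed.
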